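(* Fix $m\ge1$ and let $F_m\subseteq P$ be the set of classes $[f]$ where $f$ is a multicolored forest of corank $m$. Any two elements $[f_1],[f_2]\in F_m$ have a least upper bound $[f_1]\vee[f_2]$ in $(F_m,\le)$. If $[f_1]$ and $[f_2]$ can both be represented by elementary multicolored forests, then so can $[f_1]\vee[f_2]$.
   Context: Let $\mathfrak C=\{0,1\}^{\omega}$, $S$ a nonempty set, $G$ a subgroup of the symmetric group of $S$, and $\mathfrak C^S$ the space of functions $S\to\mathfrak C$. For $\psi\colon S\to\{0,1\}^*$ with $\psi(s)=\varnothing$ for all but finitely many $s$, the dyadic brick $B(\psi)$ is the set of $\kappa\in\mathfrak C^S$ with $\psi(s)$ a prefix of $\kappa(s)$ for all $s$; $\Phi_\psi(\kappa)(s)=\psi(s)\cdot\kappa(s)$ is the canonical homeomorphism $\mathfrak C^S\to B(\psi)$; for $\gamma\in G$, $\tau_\gamma(\kappa)(s)=\kappa(\gamma^{-1}s)$, and the twist homeomorphism $B(\varphi)\to B(\psi)$ associated to $\gamma$ is $\Phi_\psi\tau_\gamma\Phi_\varphi^{-1}$. For $m\ge1$, let $\mathfrak C^S(m)=\mathfrak C^S_1\sqcup\dots\sqcup\mathfrak C^S_m$ be a disjoint union of $m$ copies of $\mathfrak C^S$, with $\mathfrak C^S(1)=\mathfrak C^S$. A dyadic brick in $\mathfrak C^S(m)$ is a dyadic brick in one of the cubes; canonical and twist homeomorphisms between bricks in possibly different cubes are defined via the identifications of each cube with $\mathfrak C^S$. $S\mathcal V_G$ is the set of homeomorphisms $h\colon\mathfrak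 C^S(m)\to\mathfrak C^S(n)$ ($m,n\ge1$) for which there are partitions of $\mathfrak C^S(m)$ and $\mathfrak C^S(n)$ into the same number of dyadic bricks $B_i$, $B_i'$ and $\gamma_i\in G$ such that $h$ maps each $B_i$ to $B_i'$ by the twist homeomorphism associated to $\gamma_i$; $n$ is the rank and $m$ the corank of $h$. For $\sigma\in\Sigma_n$, $p_\sigma$ maps each $\mathfrak C^S_i$ to $\mathfrak C^S_{\sigma(i)}$ by the identity identification; a twisted permutation of $\mathfrak C^S(n)$ is $(\tau_{\gamma_1}\oplus\dots\oplus\tau_{\gamma_n})p_\sigma$ (where $\oplus$ applies maps to consecutive cubes), and these form a group $\mathcal G(n)\cong G\wr\Sigma_n$. A very elementary expansion of a partition $\mathcal P$ of $\mathfrak C^S(m)$ into dyadic bricks is a partition $\mathcal P'$ into dyadic bricks such that every brick of $\mathcal P$ is a union of at most two bricks of $\mathcal P'$; a dyadic partition of $\mathfrak C^S(m)$ is one obtained from $\{\mathfrak C^S_1,\dots,\mathfrak C^S_m\}$ by finitely many very elementary expansions. A multicolored forest is a homeomorphism $f\colon\mathfrak C^S(m)\to\mathfrak C^S(n)$ mapping the bricks $B_1,\dots,B_n$ of some dyadic partition of $\mathfrak C^S(m)$ onto $\mathfrak C^S_1,\dots,\mathfrak C^S_n$ respectively by canonical homeomorphisms. A dyadic brick $B(\psi)$ is elementary if $\psi(s)\in\{\varnothing,0,1\}$ for all $s\in S$; a multicolored forest is elementary if the bricks of its dyadic partition are all elementary. For $h\in S\mathcal V_G$ of rank $n$ write $[h]=\mathcal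 G(n)h$, and let $P$ be the set of all such classes. For $v,w\in P$, $v\le w$ means there exist $h\in S\mathcal V_G$ and a multicolored forest $f$ with $v=[h]$ and $w=[fh]$; this is a partial order. *)

From mathcomp Require Import ssreflect ssrfun ssrbool eqtype ssrnat seq fintype.
From Stdlib Require List.

Set Implicit Arguments.
Unset Strict Implicit.
Unset Printing Implicit Defensive.

Definition Cantor := nat -> bool.

Definition pre (w : seq bool) (x : Cantor) : Cantor :=
  fun k => if k < size w then nth false w k else x (k - size w).

Definition prefix_of (w : seq bool) (x : Cantor) : Prop :=
  forall k, k < size w -> x k = nth false w k.

Definition is_perm_subgroup (S : Type) (G : (S -> S) -> Prop) : Prop :=
  [/\ (forall g, G g -> bijective g),
      G id,
      (forall g h, G g -> G h -> G (g \o h))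
    & (forall g g', G g -> cancel g g' -> cancel g' g -> G g')].

Section Cubes.
Variable S : Type.

Definition cube := S -> Cantor.
(* a point of C^S(m) = C^S_1 ⊔ ... ⊔ C^S_m : (index of the cube, point) *)
Definition pt (m : nat) := ('I_m * cube)%type.
(* a (candidate) dyadic brick in C^S(m): cube index and psi : S -> {0,1}^* *)
Definition brick (m : nat) := ('I_m * (S -> seq bool))%type.

Definition fin_supp (psi : S -> seq bool) : Prop :=
  exists l : seq S, forall s, psi s <> [::] -> List.In s l.

Definition in_brick m (b : brick m) (x : pt m) : Prop :=
  x.1 = b.1 /\ forall s, prefix_of (b.2 s) (x.2 s).

Definition canon m (b : brick m) (k : cube) : pt m :=
  (b.1, fun s => pre (b.2 s) (k s)).

Definition is_partition m k (P : 'I_k -> brick m) : Prop :=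
  (forall j, fin_supp (P j).2) /\ (forall x : pt m, exists! j, in_brick (P j) x).

Definition vel_expansion m k k' (P : 'I_k -> brick m) (P' : 'I_k' -> brick m) :
  Prop :=
  is_partition P' /\
  forall j, exists j1 j2, forall x,
      in_brick (P j) x <-> (in_brick (P' j1) x \/ in_brick (P' j2) x).

Definition cubes_partition m : 'I_m -> brick m := fun i => (i, fun _ => [::]).

Inductive dyadic (m : nat) : forall k : nat, ('I_k -> brick m) -> Prop :=
| dyadic_base : @dyadic m m (@cubes_partition m)
| dyadic_step k (P : 'I_k -> brick m) k' (P' : 'I_k' -> brick m) :
    @dyadic m k P -> vel_expansion P P' -> @dyadic m k' P'.

Definition forest m n (f : pt m -> pt n) : Prop :=
  exists P : 'I_n -> brick m, dyadic P /\
    forall j (k : cube), f (canon (P j) k) = (j, k).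

Definition elem_forest m n (f : pt m -> pt n) : Prop :=
  exists P : 'I_n -> brick m, dyadic P /\
    (forall j s, size ((P j).2 s) <= 1) /\
    forall j (k : cube), f (canon (P j) k) = (j, k).

Variable G : (S -> S) -> Prop.

(* h maps B(phi) onto B(psi) by the twist homeomorphism Phi_psi tau_g Phi_phi^-1,
   where tau_g(kappa)(s) = kappa(g^-1 s), written inverse-free at s' = g s *)
Definition twists m n (h : pt m -> pt n) (b : brick m) (b' : brick n) (g : S -> S)
  : Prop :=
  forall k : cube, (h (canon b k)).1 = b'.1 /\
    forall s, (h (canon b k)).2 (g s) = pre (b'.2 (g s)) (k s).

Definition sv m n (h : pt m -> pt n) : Prop :=
  0 < m /\ 0 < n /\ bijective h /\
  exists k (B : 'I_k -> brick m) (B' : 'I_k -> brick n) (g : 'I_k -> S -> S),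
    [/\ is_partition B, is_partition B', (forall j, G (g j))
      & forall j, twists h (B j) (B' j) (g j)].

(* twisted permutation (tau_{g_1} + ... + tau_{g_n}) p_sigma of C^S(n) *)
Definition twisted_perm n (q : pt n -> pt n) : Prop :=
  exists (sigma : 'I_n -> 'I_n) (g : 'I_n -> S -> S),
    [/\ bijective sigma, (forall i, G (g i))
      & forall i (k : cube), (q (i, k)).1 = sigma i /\
          forall s, (q (i, k)).2 (g (sigma i) s) = k s].

Definition same_class m n (h1 h2 : pt m -> pt n) : Prop :=
  exists q, twisted_perm q /\ forall x, h2 x = q (h1 x).

Definition class_le m n p (h1 : pt m -> pt n) (h2 : pt m -> pt p) : Prop :=
  exists (h : pt m -> pt n) (f : pt n -> pt p),
    [/\ sv h, forest f, same_class h1 h & same_class h2 (fun x => f (h x))].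

Definition is_lub_Fm m n1 n2 n (f1 : pt m -> pt n1) (f2 : pt m -> pt n2)
  (g : pt m -> pt n) : Prop :=
  [/\ forest g, class_le f1 g, class_le f2 g
    & forall n' (f : pt m -> pt n'), forest f ->
        class_le f1 f -> class_le f2 f -> class_le g f].

End Cubes.

(* For forests [f1], [f] with dyadic partitions [P1], [Pf], [[f1] <= [f]] holds exactly
   when every brick of [Pf] lies in a brick of [P1]: a twisted permutation only relabels
   the cubes, so the brick of [P1] containing [x] is determined by the brick of [Pf]
   containing [x]; conversely [f] is [f1] followed by the forest whose bricks are the
   images under [f1] of the bricks of [Pf].  Hence the least upper bound of [[f1]] and
   [[f2]] is the class of the forest on the common refinement of their partitions, made
   of the nonempty intersections [B1 \cap B2].  This refinement is dyadic: following the
   very elementary expansions that produce the partition of [f2], each brick of the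
   refinement is split at most once per expansion.  Finally, a larger brick has shorter
   words, and the words of [B1 \cap B2] are the longer of those of [B1] and [B2]; so
   elementarity passes from the partitions of [f1] and [f2] to the common refinement,
   and from there to the partition of any forest in the class of the least upper bound. *)

From mathcomp Require Import ssreflect ssrfun ssrbool eqtype ssrnat seq fintype.
From Stdlib Require Import ClassicalEpsilon FunctionalExtensionality.

Set Implicit Arguments.
Unset Strict Implicit.
Unset Printing Implicit Defensive.

Section Words.

Implicit Types (u v w : seq bool) (x y : Cantor).

Definition shift (n : nat) x : Cantor := fun t => x (t + n).

Definition compat u v : Prop :=
  forall t, t < size v -> t < size u -> nth false v t = nth false u t.

Lemma pre_nil x : pre [::] x = x.
Proof. by apply: functional_extensionality => t; rewrite /pre /= subn0. Qed.

Lemma pre_cat u w x : pre u (pre w x) = pre (u ++ w) x.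
Proof.
apply: functional_extensionality => t; rewrite /pre size_cat nth_cat.
case: ifP => htu; first by rewrite (ltn_addr _ htu).
have hut : size u <= t by rewrite leqNgt htu.
by rewrite ltn_subLR // subnDA.
Qed.

Lemma prefix_of_pre w x : prefix_of w (pre w x).
Proof. by move=> t ht; rewrite /pre ht. Qed.

Lemma shift_pre w x : shift (size w) (pre w x) = x.
Proof.
apply: functional_extensionality => t.
by rewrite /shift /pre ltnNge leq_addl /= addnK.
Qed.

Lemma pre_shift w x : prefix_of w x -> pre w (shift (size w) x) = x.
Proof.
move=> hw; apply: functional_extensionality => t; rewrite /shift /pre.
by case: ifP => ht; [rewrite hw | rewrite subnK // leqNgt ht].
Qed.

Lemma compat_of_prefix_of u v x : prefix_of u x -> prefix_of v x -> compat u v.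
Proof. by move=> hu hv t htv htu; rewrite -hu // -hv. Qed.

Lemma prefix_of_pre_drop u v x :
  compat u v -> prefix_of u (pre v x) <-> prefix_of (drop (size v) u) x.
Proof.
move=> huv; split=> hu t.
- rewrite size_drop => ht; have htv : t + size v < size u by rewrite addnC -ltn_subRL.
  by move: (hu _ htv); rewrite /pre ltnNge leq_addl /= addnK nth_drop addnC.
- move=> htu; rewrite /pre; case: ifP => htv; first by rewrite huv.
  have hvt : size v <= t by rewrite leqNgt htv.
  rewrite hu ?nth_drop ?subnKC // size_drop ltn_sub2r //.
  exact: leq_ltn_trans hvt htu.
Qed.

Lemma prefix_of_shorter u v x y : prefix_of u x -> prefix_of v x ->
  size v <= size u -> prefix_of u y -> prefix_of v y.
Proof.
move=> hu hv hvu hy t htv; have htu : t < size u by exact: leq_trans htv hvu.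
by rewrite hy // -hu // hv.
Qed.

End Words.

Section Bricks.

Variable S : Type.

Definition subbrick m (b b' : brick S m) : Prop :=
  forall x, in_brick b x -> in_brick b' x.

Definition decode m (b : brick S m) (x : pt S m) : cube S :=
  fun s => shift (size (b.2 s)) (x.2 s).

Lemma canon_in_brick m (b : brick S m) k : in_brick b (canon b k).
Proof. by split => // s; apply: prefix_of_pre. Qed.

Lemma canon_decode m (b : brick S m) x : in_brick b x -> canon b (decode b x) = x.
Proof.
case: x => i x [/= -> hx]; congr pair.
by apply: functional_extensionality => s; rewrite /decode pre_shift.
Qed.

Lemma decode_canon m (b : brick S m) k : decode b (canon b k) = k.
Proof. by apply: functional_extensionality => s; rewrite /decode shift_pre. Qed.

Lemma subbrick_prefix m (b b' : brick S m) :
  subbrick b b' -> b.1 = b'.1 /\ forall s, prefix (b'.2 s) (b.2 s).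
Proof.
move=> hbb'; split; first by case: (hbb' _ (canon_in_brick b (fun _ _ => false))).
move=> s; have key c : prefix_of (b'.2 s) (pre (b.2 s) c).
  by case: (hbb' _ (canon_in_brick b (fun _ => c))) => _ /(_ s).
have hsize : size (b'.2 s) <= size (b.2 s).
  rewrite leqNgt; apply/negP => hlt.
  (* Continue [b.2 s] with the negation of the next letter of [b'.2 s]. *)
  have := key (fun _ => ~~ nth false (b'.2 s) (size (b.2 s))) _ hlt.
  by rewrite /pre ltnn; case: nth.
rewrite prefixE; apply/eqP/(@eq_from_nth _ false) => [|t]; rewrite size_takel //.
by move=> ht; rewrite nth_take // -(key (fun _ => false)) // /pre (leq_trans ht hsize).
Qed.

Lemma brick_meet m (b1 b2 : brick S m) x :
  fin_supp b1.2 -> fin_supp b2.2 -> in_brick b1 x -> in_brick b2 x ->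
  exists b : brick S m, [/\ fin_supp b.2,
    forall y, in_brick b y <-> in_brick b1 y /\ in_brick b2 y
    & forall s, size (b.2 s) <= maxn (size (b1.2 s)) (size (b2.2 s))].
Proof.
move=> [l1 hl1] [l2 hl2] [hx1 hx1'] [hx2 hx2'].
exists (b1.1, fun s => if size (b1.2 s) <= size (b2.2 s) then b2.2 s else b1.2 s).
split.
- by exists (l1 ++ l2) => s /=; case: ifP => _ h; apply: List.in_or_app; auto.
- move=> y; split=> [[hy hys]|[[hy1 hy1s] [hy2 hy2s]]]; last first.
    by split=> //= s; case: ifP.
  split; split=> [|s]; rewrite ?hy -?hx1 ?hx2 //; have /= := hys s; case: ifP => hs //.
  + by move/(prefix_of_shorter (hx2' s) (hx1' s) hs).
  + by apply: prefix_of_shorter (hx1' s) (hx2' s) _; rewrite ltnW // ltnNge hs.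
- by move=> s /=; case: ifP => _; rewrite ?leq_maxl ?leq_maxr.
Qed.

End Bricks.

Section Partitions.

Variables (S : Type) (m : nat).

Lemma cubes_is_partition : is_partition (@cubes_partition S m).
Proof.
split=> [j|x]; first by exists [::].
by exists x.1; split=> [|j []] //; split=> // s t.
Qed.

Lemma dyadic_is_partition k (P : 'I_k -> brick S m) : dyadic P -> is_partition P.
Proof. by case=> [|k0 P0 k1 P1 _ []]; last by []; exact: cubes_is_partition. Qed.

Lemma partition_cover k (P : 'I_k -> brick S m) x :
  is_partition P -> exists j, in_brick (P j) x.
Proof. by case=> _ /(_ x) [j [hj _]]; exists j. Qed.

Lemma partition_uniq k (P : 'I_k -> brick S m) x j j' :
  is_partition P -> in_brick (P j) x -> in_brick (P j') x -> j = j'.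
Proof. by case=> _ /(_ x) [j0 [_ hu]] hj hj'; rewrite -(hu _ hj) -(hu _ hj'). Qed.

Lemma dyadic_relabel k (P : 'I_k -> brick S m) k' (P' : 'I_k' -> brick S m) :
  dyadic P -> (forall i, fin_supp (P' i).2) ->
  (forall j, exists i, forall x, in_brick (P j) x <-> in_brick (P' i) x) ->
  (forall i i' x, in_brick (P' i) x -> in_brick (P' i') x -> i = i') ->
  dyadic P'.
Proof.
move=> hP hfin hP' hdisj; apply: (dyadic_step hP); split; last first.
  by move=> j; have [i hi] := hP' j; exists i, i => x; rewrite hi; tauto.
split=> // x; have [j hx] := partition_cover x (dyadic_is_partition hP).
have [i hi] := hP' j; exists i; split=> [|i']; first exact/hi.
exact: hdisj (proj1 (hi x) hx).
Qed.

Definition brick_split (b A B : brick S m) : Prop :=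
  [/\ fin_supp A.2, fin_supp B.2,
      forall x, in_brick b x <-> in_brick A x \/ in_brick B x
    & forall x, in_brick A x -> in_brick B x -> False].

(* [P i0] is replaced by [A], and [B] is appended as the last brick. *)
Definition split_at k (P : 'I_k -> brick S m) (i0 : 'I_k) (A B : brick S m)
    (i : 'I_k.+1) : brick S m :=
  if unlift ord_max i is Some j then (if j == i0 then A else P j) else B.

Lemma dyadic_split_at k (P : 'I_k -> brick S m) i0 A B :
  dyadic P -> brick_split (P i0) A B -> dyadic (split_at P i0 A B).
Proof.
move=> hP [hA hB hAB hdisj]; have hpart := dyadic_is_partition hP.
have split_lift j : split_at P i0 A B (lift ord_max j) = if j == i0 then A else P j.
  by rewrite /split_at liftK.
have split_max : split_at P i0 A B ord_max = B by rewrite /split_at unlift_none.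
have split_sub j : subbrick (split_at P i0 A B (lift ord_max j)) (P j).
  by move=> x; rewrite split_lift; case: eqP => [-> hx|//]; apply/hAB; left.
have hB0 x : in_brick B x -> in_brick (P i0) x by move=> hx; apply/hAB; right.
apply: (dyadic_step hP); split; last first.
  move=> j; case: (eqVneq j i0) => [->|nj].
    by exists (lift ord_max i0), ord_max => x; rewrite split_lift eqxx split_max.
  exists (lift ord_max j), (lift ord_max j) => x.
  by rewrite split_lift (negbTE nj); tauto.
split=> [i|x].
  case: (unliftP ord_max i) => [j ->|->]; rewrite ?split_lift ?split_max //.
  by case: eqP => _ //; case: hpart.
have [i hi] : exists i, in_brick (split_at P i0 A B i) x.
  have [j hx] := partition_cover x hpart; case: (eqVneq j i0) => [ej|nj].
    case: (proj1 (hAB x)); first by rewrite -ej.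
      by exists (lift ord_max i0); rewrite split_lift eqxx.
    by exists ord_max; rewrite split_max.
  by exists (lift ord_max j); rewrite split_lift (negbTE nj).
have lift_max j : in_brick (split_at P i0 A B (lift ord_max j)) x ->
    in_brick (split_at P i0 A B ord_max) x -> False.
  move=> h1; rewrite split_max => h2.
  have ej := partition_uniq hpart (split_sub _ _ h1) (hB0 _ h2).
  by move: h1; rewrite ej split_lift eqxx => /hdisj; apply.
exists i; split=> // i' hi'.
case: (unliftP ord_max i) hi => [j1 ->|->] h1;
  case: (unliftP ord_max i') hi' => [j2 ->|->] h2 //.
- by rewrite (partition_uniq hpart (split_sub _ _ h1) (split_sub _ _ h2)).
- by case: (lift_max _ h1 h2).
- by case: (lift_max _ h2 h1).
Qed.

Definition piece (b : brick S m) (d : option (brick S m * brick S m)) (c : brick S m) :=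
  if d is Some (A, B) then c = A \/ c = B else c = b.

Section SplitEach.

Variables (k : nat) (P : 'I_k -> brick S m).
Variable D : 'I_k -> option (brick S m * brick S m).
Hypothesis P_dyadic : dyadic P.
Hypothesis D_split : forall j A B, D j = Some (A, B) -> brick_split (P j) A B.

(* The bricks are split one at a time, in increasing order of index. *)
Let D_upto t (j : 'I_k) := if j < t then D j else None.

Let split_upto t k' (P' : 'I_k' -> brick S m) :=
  dyadic P' /\ forall i, exists j, piece (P j) (D_upto t j) (P' i).

Lemma piece_sub t j c : piece (P j) (D_upto t j) c -> subbrick c (P j).
Proof.
rewrite /D_upto; case: ifP => _; last by move=> -> x.
case eD: (D j) => [[A B]|] /= hc x; last by rewrite hc.
by have [_ _ hAB _] := D_split eD; rewrite hAB; case: hc => ->; tauto.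
Qed.

Lemma split_upto_succ t k' (P' : 'I_k' -> brick S m) (ht : t < k) :
  split_upto t P' -> exists k'' (P'' : 'I_k'' -> brick S m), split_upto t.+1 P''.
Proof.
move=> [hP' hpiece]; have hpart := dyadic_is_partition P_dyadic.
have hpart' := dyadic_is_partition hP'.
pose jt : 'I_k := Ordinal ht.
have D_upto_succ j : j != jt -> D_upto t.+1 j = D_upto t j.
  move=> nj; rewrite /D_upto ltnS leq_eqVlt; case: eqP => // ej.
  by case/eqP: nj; apply: val_inj.
have D_upto_jt : D_upto t.+1 jt = D jt by rewrite /D_upto ltnSn.
have D_upto_jt' : D_upto t jt = None by rewrite /D_upto ltnn.
case eD: (D jt) => [[A B]|]; last first.
  exists k', P'; split=> // i; have [j hj] := hpiece i; exists j.
  by case: (eqVneq j jt) hj => [->|nj]; rewrite ?D_upto_jt ?eD ?D_upto_jt' ?D_upto_succ.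
have hx := canon_in_brick (P jt) (fun _ _ => false).
have [i0 hi0] := partition_cover (canon (P jt) (fun _ _ => false)) hpart'.
have e0 : P' i0 = P jt.
  have [j hj] := hpiece i0; have ej := partition_uniq hpart (piece_sub hj hi0) hx.
  by move: hj; rewrite ej D_upto_jt'.
exists k'.+1, (split_at P' i0 A B); split.
  by apply: dyadic_split_at => //; rewrite e0; apply: D_split.
move=> i; case: (unliftP ord_max i) => [i' ->|->]; rewrite /split_at ?liftK ?unlift_none;
  last by exists jt; rewrite D_upto_jt eD; right.
case: eqP => [_|ni]; first by exists jt; rewrite D_upto_jt eD; left.
have [j hj] := hpiece i'; exists j.
case: (eqVneq j jt) hj => [->|nj]; last by rewrite D_upto_succ.
rewrite D_upto_jt' /= => ei'; case: ni.
apply: partition_uniq hpart' (canon_in_brick (P' i') (fun _ _ => false)) _.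
by rewrite e0 -ei'; apply: canon_in_brick.
Qed.

Lemma dyadic_split_each :
  exists k' (P' : 'I_k' -> brick S m), dyadic P' /\
    forall i, exists j, piece (P j) (D j) (P' i).
Proof.
suff /(_ k (leqnn k)) [k' [P' [hP' hpiece]]] :
    forall t, t <= k -> exists k' (P' : 'I_k' -> brick S m), split_upto t P'.
  exists k', P'; split=> // i.
  by have [j] := hpiece i; rewrite /D_upto ltn_ord; exists j.
elim=> [_|t IH ht]; first by exists k, P; split=> // i; exists i.
by have [k' [P' hP']] := IH (ltnW ht); apply: split_upto_succ hP'.
Qed.

End SplitEach.

End Partitions.

Section Pullback.

Variables (S : Type) (n m : nat) (pi : pt S n -> pt S m).

Definition pullback_bricks : Prop :=
  forall (B : brick S n) (C : brick S m), fin_supp B.2 -> fin_supp C.2 ->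
    (exists y, in_brick B y /\ in_brick C (pi y)) ->
    exists D : brick S n, fin_supp D.2 /\
      forall y, in_brick D y <-> in_brick B y /\ in_brick C (pi y).

Hypothesis pi_pullback : pullback_bricks.

Variables (kR : nat) (R0 : 'I_kR -> brick S n).
Hypothesis R0_dyadic : dyadic R0.
Hypothesis R0_cube : forall i, exists c, forall y, in_brick (R0 i) y -> (pi y).1 = c.

Definition cut (i0 : 'I_kR) (C : brick S m) (b : brick S n) : Prop :=
  forall y, in_brick b y <-> in_brick (R0 i0) y /\ in_brick C (pi y).

Lemma cut_split i0 (C C1 C2 : brick S m) (b : brick S n) :
  fin_supp C1.2 -> fin_supp C2.2 ->
  (forall x, in_brick C x <-> in_brick C1 x \/ in_brick C2 x) ->
  (forall x, in_brick C1 x -> in_brick C2 x -> False) ->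
  cut i0 C b ->
  [\/ cut i0 C1 b, cut i0 C2 b |
      exists A B, [/\ brick_split b A B, cut i0 C1 A & cut i0 C2 B]].
Proof.
move=> hC1 hC2 hC hdisj hb.
have hR0 := proj1 (dyadic_is_partition R0_dyadic) i0.
case: (classic (exists y, in_brick (R0 i0) y /\ in_brick C1 (pi y))) => [ex1|nx1].
  case: (classic (exists y, in_brick (R0 i0) y /\ in_brick C2 (pi y))) => [ex2|nx2].
    have [A [hA hAy]] := pi_pullback hR0 hC1 ex1.
    have [B [hB hBy]] := pi_pullback hR0 hC2 ex2.
    apply: Or33; exists A, B; split=> //; split=> // y.
      by rewrite hb hAy hBy hC; tauto.
    by rewrite hAy hBy => -[_ h1] [_ h2]; apply: hdisj h1 h2.
  apply: Or31 => y; rewrite hb hC.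
  by split=> [[hy [h1|h2]]|]; [| case: nx2; exists y |]; tauto.
apply: Or32 => y; rewrite hb hC.
by split=> [[hy [h1|h2]]|]; [case: nx1; exists y | |]; tauto.
Qed.

Definition splits_along kQ (Q : 'I_kQ -> brick S m) (b : brick S n)
    (d : option (brick S n * brick S n)) : Prop :=
  exists i0, if d is Some (A, B)
    then exists c1 c2, [/\ brick_split b A B, cut i0 (Q c1) A & cut i0 (Q c2) B]
    else exists c, cut i0 (Q c) b.

Lemma splits_along_piece kQ (Q : 'I_kQ -> brick S m) b d b' :
  splits_along Q b d -> piece b d b' -> exists i0 c, cut i0 (Q c) b'.
Proof.
case: d => [[A B]|] [i0 hb] /=; last by move=> ->; exists i0.
by case: hb => c1 [c2 [_ hA hB]] [->|->]; [exists i0, c1 | exists i0, c2].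
Qed.

Lemma splits_along_exists kQ (Q0 : 'I_kQ -> brick S m) kQ' (Q1 : 'I_kQ' -> brick S m)
    i0 c b :
  vel_expansion Q0 Q1 -> cut i0 (Q0 c) b -> exists d, splits_along Q1 b d.
Proof.
move=> [hpart1 hvel] hb; have [c1 [c2 hc]] := hvel c; have hfin := proj1 hpart1.
case: (eqVneq c1 c2) => [ec|nc].
  by exists None, i0, c1 => y; rewrite hb hc -ec; tauto.
have hdisj x : in_brick (Q1 c1) x -> in_brick (Q1 c2) x -> False.
  by move=> h1 h2; case/eqP: nc; apply: partition_uniq hpart1 h1 h2.
case: (cut_split (hfin c1) (hfin c2) hc hdisj hb) => [h|h|[A [B [hAB hA hB]]]].
- by exists None, i0, c1.
- by exists None, i0, c2.
- by exists (Some (A, B)), i0, c1, c2.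
Qed.

Lemma dyadic_pullback kQ (Q : 'I_kQ -> brick S m) : dyadic Q ->
  exists k (R : 'I_k -> brick S n), dyadic R /\
    forall i, exists i0 c, cut i0 (Q c) (R i).
Proof.
elim=> [|kq Q0 kq' Q1 _ [k [R [hR hcut]]] hvel].
  exists kR, R0; split=> // i; have [c hc] := R0_cube i.
  by exists i, c => y; split=> [hy|[]//]; split=> //; split=> [|s t]; [exact: hc|].
have [D hD] : exists D, forall i, splits_along Q1 (R i) (D i).
  apply: (choice (fun i => splits_along Q1 (R i))) => i.
  by have [i0 [c hc]] := hcut i; apply: splits_along_exists hvel hc.
have hsplit j A B : D j = Some (A, B) -> brick_split (R j) A B.
  by move=> eD; have [i0] := hD j; rewrite eD => -[c1 [c2 []]].
have [k' [R' [hR' hpiece]]] := dyadic_split_each hR hsplit.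
exists k', R'; split=> // i.
by have [j hj] := hpiece i; apply: splits_along_piece (hD j) hj.
Qed.

End Pullback.

Section Forests.

Variable S : Type.

Definition forest_on m n (P : 'I_n -> brick S m) (f : pt S m -> pt S n) : Prop :=
  forall j k, f (canon (P j) k) = (j, k).

Definition forest_inv m n (P : 'I_n -> brick S m) (y : pt S n) : pt S m :=
  canon (P y.1) y.2.

Variables (m n : nat) (P : 'I_n -> brick S m).

Lemma forest_on_brick f x j :
  forest_on P f -> in_brick (P j) x -> f x = (j, decode (P j) x).
Proof. by move=> hf hx; rewrite -{1}(canon_decode hx) hf. Qed.

Lemma forest_on_fst f x j :
  dyadic P -> forest_on P f -> (f x).1 = j <-> in_brick (P j) x.
Proof.
move=> hP hf; have hpart := dyadic_is_partition hP.
have [j0 hj0] := partition_cover x hpart; rewrite (forest_on_brick hf hj0).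
by split=> [<-|] //; apply: partition_uniq hpart hj0.
Qed.

Lemma forest_invK f : dyadic P -> forest_on P f -> cancel f (forest_inv P).
Proof.
move=> hP hf x; have [j hj] := partition_cover x (dyadic_is_partition hP).
by rewrite (forest_on_brick hf hj) /forest_inv canon_decode.
Qed.

Lemma forest_inv_can f : forest_on P f -> cancel (forest_inv P) f.
Proof. by move=> hf [j k]; apply: hf. Qed.

Lemma forest_on_exists : dyadic P -> exists f, forest_on P f.
Proof.
move=> hP; have hpart := dyadic_is_partition hP.
have [J hJ] := choice (fun x j => in_brick (P j) x) (fun x => partition_cover x hpart).
exists (fun x => (J x, decode (P (J x)) x)) => j k.
by rewrite (partition_uniq hpart (hJ _) (canon_in_brick _ k)) decode_canon.
Qed.

Definition image_brick (a : 'I_n) (C : brick S m) : brick S n :=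
  (a, fun s => drop (size ((P a).2 s)) (C.2 s)).

Lemma fin_supp_image_brick a C : fin_supp C.2 -> fin_supp (image_brick a C).2.
Proof. by case=> l hl; exists l => s /= hs; apply: hl => hC; rewrite hC in hs. Qed.

Lemma in_image_brick a C y : (exists z, in_brick C z /\ in_brick (P a) z) ->
  in_brick (image_brick a C) y <-> y.1 = a /\ in_brick C (forest_inv P y).
Proof.
case=> z [[hCz hC] [hPz hP]]; have hcompat s := compat_of_prefix_of (hC s) (hP s).
rewrite /in_brick /forest_inv /=; split=> [[-> hy]|[-> [_ hy]]].
  by split=> //; split=> [|s]; [rewrite -hCz hPz | apply/prefix_of_pre_drop].
by split=> // s; apply/prefix_of_pre_drop.
Qed.

Lemma forest_inv_image_brick a C k :
  subbrick C (P a) -> forest_inv P (canon (image_brick a C) k) = canon C k.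
Proof.
case/subbrick_prefix=> hC1 hC2; rewrite /forest_inv /canon /= hC1; congr pair.
apply: functional_extensionality => s; rewrite pre_cat.
by have /prefixP [w ->] := hC2 s; rewrite drop_size_cat.
Qed.

Lemma forest_inv_pullback_bricks : pullback_bricks (forest_inv P).
Proof.
move=> B C hB hC [y0 [hy0 hCy0]].
have hmeet : exists z, in_brick C z /\ in_brick (P y0.1) z.
  by exists (forest_inv P y0); split=> //; apply: canon_in_brick.
have hy0' : in_brick (image_brick y0.1 C) y0 by apply/in_image_brick.
have [D [hD hDy _]] := brick_meet hB (fin_supp_image_brick y0.1 hC) hy0 hy0'.
exists D; split=> // y; rewrite hDy in_image_brick //.
split=> [[hy [_ hCy]]|[hy hCy]] //; split=> //; split=> //.
by rewrite (proj1 hy) (proj1 hy0).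
Qed.

End Forests.

Lemma dyadic_image_bricks (S : Type) m n1 n (P1 : 'I_n1 -> brick S m)
    (Pf : 'I_n -> brick S m) (A : 'I_n -> 'I_n1) :
  dyadic P1 -> dyadic Pf -> (forall c, subbrick (Pf c) (P1 (A c))) ->
  dyadic (fun c => image_brick P1 (A c) (Pf c)).
Proof.
move=> hP1 hPf hA; have hpart1 := dyadic_is_partition hP1.
have hpartf := dyadic_is_partition hPf.
have fst_A c y : in_brick (Pf c) (forest_inv P1 y) -> y.1 = A c.
  by move=> hy; apply: partition_uniq hpart1 (canon_in_brick _ _) (hA _ _ hy).
have in_R c y :
    in_brick (image_brick P1 (A c) (Pf c)) y <-> in_brick (Pf c) (forest_inv P1 y).
  rewrite in_image_brick; first by split=> [[]|hy] //; split=> //; apply: fst_A.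
  exists (canon (Pf c) (fun _ _ => false)).
  by split; [|apply: hA]; apply: canon_in_brick.
have R0_cube i : exists a, forall y,
    in_brick (@cubes_partition S n1 i) y -> (forest_inv P1 y).1 = a.
  by exists (P1 i).1 => y [hy _]; rewrite /forest_inv hy.
have hpb := @forest_inv_pullback_bricks S m n1 P1.
have [k [R [hR hcut]]] := dyadic_pullback hpb (dyadic_base S n1) R0_cube hPf.
apply: (dyadic_relabel hR) => [c|i|c c' y]; last by rewrite !in_R; apply: partition_uniq.
  by apply: fin_supp_image_brick; case: hpartf.
have [i0 [c hc]] := hcut i; exists c => y; rewrite hc in_R.
have [[hi0 _] hz] := proj1 (hc _) (canon_in_brick (R i) (fun _ _ => false)).
split=> [[]//|hy]; split=> //; split=> [|s t] //=.
by rewrite (fst_A _ _ hy) -(fst_A _ _ hz) hi0.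
Qed.

Section Order.

Variables (S : Type) (G : (S -> S) -> Prop).
Hypothesis G_id : G id.

Definition refines m k n (Q : 'I_k -> brick S m) (P : 'I_n -> brick S m) : Prop :=
  forall c, exists a, subbrick (Q c) (P a).

Lemma twisted_perm_id n : twisted_perm G (@id (pt S n)).
Proof. by exists id, (fun _ => id); split=> //; exists id. Qed.

Lemma same_class_refl m n (h : pt S m -> pt S n) : same_class G h h.
Proof. by exists id; split=> //; apply: twisted_perm_id. Qed.

Lemma same_class_fst m n (h1 h2 : pt S m -> pt S n) : same_class G h1 h2 ->
  exists2 sigma : 'I_n -> 'I_n, injective sigma & forall x, (h2 x).1 = sigma (h1 x).1.
Proof.
case=> q [[sigma [g [/bij_inj hsigma _ hq]]] e]; exists sigma => // x.
by rewrite e; case: (h1 x) => i k; case: (hq i k).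
Qed.

Lemma forest_on_sv m n (P : 'I_n -> brick S m) f :
  0 < m -> dyadic P -> forest_on P f -> sv G f.
Proof.
move=> hm hP hf; have hpart := dyadic_is_partition hP.
have [[i hi] _] := partition_cover (Ordinal hm, fun _ _ => false) hpart.
split=> //; split; first exact: leq_ltn_trans (leq0n i) hi.
split; first by exists (forest_inv P); [apply: forest_invK | apply: forest_inv_can].
exists n, P, (@cubes_partition S n), (fun _ => id); split=> //.
  exact: cubes_is_partition.
by move=> j k; rewrite hf; split=> // s; rewrite pre_nil.
Qed.

Section Refines.

Variables (m n1 n : nat) (P1 : 'I_n1 -> brick S m) (f1 : pt S m -> pt S n1).
Variables (Pf : 'I_n -> brick S m) (f : pt S m -> pt S n).
Hypotheses (P1_dyadic : dyadic P1) (f1_forest : forest_on P1 f1).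
Hypothesis f_forest : forest_on Pf f.

Lemma refines_of_fst :
  (forall x y, (f x).1 = (f y).1 -> (f1 x).1 = (f1 y).1) -> refines Pf P1.
Proof.
move=> hff1 c; pose x0 := canon (Pf c) (fun _ _ => false).
exists (f1 x0).1 => x hx; apply/(forest_on_fst _ _ P1_dyadic f1_forest).
by apply: hff1; rewrite (forest_on_brick f_forest hx) /x0 f_forest.
Qed.

Lemma refines_of_class_le : class_le G f1 f -> refines Pf P1.
Proof.
case=> h [fa [_ [Pa [hPa hfa]] /same_class_fst [s1 hs1 e1] /same_class_fst [s2 _ e2]]].
apply: refines_of_fst => x y exy; apply: hs1; rewrite -!e1.
have hPa_fst z : in_brick (Pa (fa z).1) z by apply/(forest_on_fst _ _ hPa hfa).
have efa : (fa (h x)).1 = (fa (h y)).1 by rewrite !e2 exy.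
by rewrite (proj1 (hPa_fst (h x))) (proj1 (hPa_fst (h y))) efa.
Qed.

End Refines.

Lemma refines_of_same_class m n (P1 Pe : 'I_n -> brick S m) f1 e :
  dyadic P1 -> forest_on P1 f1 -> forest_on Pe e -> same_class G f1 e -> refines Pe P1.
Proof.
move=> hP1 hf1 he /same_class_fst [sigma hsigma hfe].
by apply: refines_of_fst hP1 hf1 he _ => x y; rewrite !hfe => /hsigma.
Qed.

Lemma class_le_of_refines m n1 n (P1 : 'I_n1 -> brick S m) f1
    (Pf : 'I_n -> brick S m) f :
  0 < m -> dyadic P1 -> forest_on P1 f1 -> dyadic Pf -> forest_on Pf f ->
  refines Pf P1 -> class_le G f1 f.
Proof.
move=> hm hP1 hf1 hPf hf /(choice (fun c a => subbrick (Pf c) (P1 a))) [A hA].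
(* [f = (f \o f1^-1) \o f1], and the bricks of the forest [f \o f1^-1] are the
   images under [f1] of those of [Pf]. *)
exists f1, (fun y => f (forest_inv P1 y)); split.
- exact: forest_on_sv hm hP1 hf1.
- exists (fun c => image_brick P1 (A c) (Pf c)).
  split=> [|j k]; first exact: dyadic_image_bricks hP1 hPf hA.
  by rewrite forest_inv_image_brick.
- exact: same_class_refl.
- by exists id; split=> [|x]; [apply: twisted_perm_id | rewrite forest_invK].
Qed.

End Order.

Section Meet.

Variables (S : Type) (m : nat).

Definition meet_bricks k n1 n2 (Q : 'I_k -> brick S m) (P1 : 'I_n1 -> brick S m)
    (P2 : 'I_n2 -> brick S m) : Prop :=
  forall i, exists a c, forall x,
    in_brick (Q i) x <-> in_brick (P1 a) x /\ in_brick (P2 c) x.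

Definition elementary n (P : 'I_n -> brick S m) : Prop :=
  forall j s, size ((P j).2 s) <= 1.

Lemma common_refinement n1 n2 (P1 : 'I_n1 -> brick S m) (P2 : 'I_n2 -> brick S m) :
  dyadic P1 -> dyadic P2 ->
  exists k (Q : 'I_k -> brick S m), dyadic Q /\ meet_bricks Q P1 P2.
Proof.
move=> hP1 hP2; have id_pullback : pullback_bricks (@id (pt S m)).
  move=> B C hB hC [y [hyB hyC]].
  by have [D [hD hDy _]] := brick_meet hB hC hyB hyC; exists D.
have P1_cube i : exists c, forall y, in_brick (P1 i) y -> (id y).1 = c.
  by exists (P1 i).1 => y [].
by have [k [Q [hQ hQ12]]] := dyadic_pullback id_pullback hP1 P1_cube hP2; exists k, Q.
Qed.

Section MeetOfPartitions.

Variables (n1 n2 k : nat) (P1 : 'I_n1 -> brick S m) (P2 : 'I_n2 -> brick S m).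
Variable Q : 'I_k -> brick S m.
Hypotheses (P1_partition : is_partition P1) (P2_partition : is_partition P2).
Hypotheses (Q_partition : is_partition Q) (Q_meet : meet_bricks Q P1 P2).

Lemma meet_refines1 : refines Q P1.
Proof. by move=> i; have [a [c hac]] := Q_meet i; exists a => x /hac []. Qed.

Lemma meet_refines2 : refines Q P2.
Proof. by move=> i; have [a [c hac]] := Q_meet i; exists c => x /hac []. Qed.

Lemma refines_meet kf (Pf : 'I_kf -> brick S m) :
  refines Pf P1 -> refines Pf P2 -> refines Pf Q.
Proof.
move=> r1 r2 c; have [a ha] := r1 c; have [b hb] := r2 c.
have hx0 := canon_in_brick (Pf c) (fun _ _ => false).
have [i hi] := partition_cover (canon (Pf c) (fun _ _ => false)) Q_partition.
have [a' [b' hab]] := Q_meet i; have [h1 h2] := proj1 (hab _) hi.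
have ea := partition_uniq P1_partition h1 (ha _ hx0).
have eb := partition_uniq P2_partition h2 (hb _ hx0).
by exists i => x hx; apply/hab; rewrite ea eb; split; [apply: ha | apply: hb].
Qed.

Lemma elementary_meet : elementary P1 -> elementary P2 -> elementary Q.
Proof.
move=> el1 el2 i s; have [a [c hac]] := Q_meet i.
have [h1 h2] := proj1 (hac _) (canon_in_brick (Q i) (fun _ _ => false)).
have [I [_ hI hIs]] := brick_meet (proj1 P1_partition a) (proj1 P2_partition c) h1 h2.
have /subbrick_prefix [_ /(_ s) /size_prefix hs] : subbrick I (Q i).
  by move=> x /hI /hac.
by apply: leq_trans hs (leq_trans (hIs s) _); rewrite geq_max el1 el2.
Qed.

End MeetOfPartitions.

Lemma elementary_coarsen k n (Q : 'I_k -> brick S m) (P : 'I_n -> brick S m) :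
  is_partition Q -> is_partition P -> refines Q P -> elementary Q -> elementary P.
Proof.
move=> hpartQ hpartP hQP elQ a s; have hx := canon_in_brick (P a) (fun _ _ => false).
have [c hc] := partition_cover (canon (P a) (fun _ _ => false)) hpartQ.
have [a' ha'] := hQP c; have ea := partition_uniq hpartP (ha' _ hc) hx.
rewrite ea in ha'; have [_ /(_ s) /size_prefix hs] := subbrick_prefix ha'.
exact: leq_trans hs (elQ c s).
Qed.

End Meet.

Lemma forest_meet_is_lub S (G : (S -> S) -> Prop) m n1 n2 k
    (P1 : 'I_n1 -> brick S m) f1 (P2 : 'I_n2 -> brick S m) f2 (Q : 'I_k -> brick S m) g :
  G id -> 0 < m -> dyadic P1 -> forest_on P1 f1 -> dyadic P2 -> forest_on P2 f2 ->
  dyadic Q -> meet_bricks Q P1 P2 -> forest_on Q g -> is_lub_Fm G f1 f2 g.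
Proof.
move=> hG hm hP1 hf1 hP2 hf2 hQ hQ12 hg.
have [hpart1 hpart2] := (dyadic_is_partition hP1, dyadic_is_partition hP2).
have [rQ1 rQ2] := (meet_refines1 hQ12, meet_refines2 hQ12).
split; first by exists Q.
- exact: (class_le_of_refines hG hm hP1 hf1 hQ hg rQ1).
- exact: (class_le_of_refines hG hm hP2 hf2 hQ hg rQ2).
move=> n f [Pf [hPf hf]] le1 le2; apply: (class_le_of_refines hG hm hQ hg hPf hf).
apply: (refines_meet hpart1 hpart2 (dyadic_is_partition hQ) hQ12).
- exact: refines_of_class_le hP1 hf1 hf le1.
- exact: refines_of_class_le hP2 hf2 hf le2.
Qed.

Lemma elementary_of_same_class S (G : (S -> S) -> Prop) m n (P : 'I_n -> brick S m) f
    (Pe : 'I_n -> brick S m) e :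
  dyadic P -> forest_on P f -> dyadic Pe -> forest_on Pe e -> elementary Pe ->
  same_class G f e -> elementary P.
Proof.
move=> hP hf hPe he elPe sc.
apply: elementary_coarsen (dyadic_is_partition hPe) (dyadic_is_partition hP) _ elPe.
exact: refines_of_same_class hP hf he sc.
Qed.

Theorem proposition5p3 (S : Type) (G : (S -> S) -> Prop) (m : nat) :
  inhabited S -> is_perm_subgroup G -> 0 < m ->
  forall (n1 n2 : nat) (f1 : pt S m -> pt S n1) (f2 : pt S m -> pt S n2),
    forest f1 -> forest f2 ->
    (exists (n : nat) (g : pt S m -> pt S n), is_lub_Fm G f1 f2 g) /\
    ((exists e1 : pt S m -> pt S n1, elem_forest e1 /\ same_class G f1 e1) ->
     (exists e2 : pt S m -> pt S n2, elem_forest e2 /\ same_class G f2 e2) ->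
     forall (n : nat) (g : pt S m -> pt S n), is_lub_Fm G f1 f2 g ->
       exists e : pt S m -> pt S n, elem_forest e /\ same_class G g e).
Proof.
move=> _ [_ hG _ _] hm n1 n2 f1 f2 [P1 [hP1 hf1]] [P2 [hP2 hf2]].
have [k [Q [hQ hQ12]]] := common_refinement hP1 hP2.
have [g hg] := forest_on_exists hQ.
have lub := forest_meet_is_lub hG hm hP1 hf1 hP2 hf2 hQ hQ12 hg.
split; first by exists k, g.
have [forest_g ub1 ub2 _] := lub.
move=> [e1 [[Pe1 [hPe1 [el1 he1]]] sc1]] [e2 [[Pe2 [hPe2 [el2 he2]]] sc2]] n g'.
move=> [[Pg [hPg hfg]] _ _ least]; exists g'; split; last exact: same_class_refl.
exists Pg; split=> //; split=> //.
have elQ : elementary Q.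
  apply: (elementary_meet (dyadic_is_partition hP1) (dyadic_is_partition hP2) hQ12).
  - exact: elementary_of_same_class hP1 hf1 hPe1 he1 el1 sc1.
  - exact: elementary_of_same_class hP2 hf2 hPe2 he2 el2 sc2.
apply: elementary_coarsen (dyadic_is_partition hQ) (dyadic_is_partition hPg) _ elQ.
exact: refines_of_class_le hPg hfg hg (least _ _ forest_g ub1 ub2).
Qed.
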